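(* Let $\phi(z)\in\mathbb{Q}[z]$ be a polynomial of degree $d\geq 2$ with lead coefficient $a\in\mathbb{Q}^{\times}$. Let $e\geq 1$ be an integer, let $\gamma=\sqrt[e]{a}\in\overline{\mathbb{Q}}$ be an $e$-th root of $a$, and define $\psi(z)=\gamma\,\phi(\gamma^{-1}z)$. For each place $v\in M_{\mathbb{Q}}$ at which $\phi$ has bad reduction, let $c_v$ and $C_v$ be the following constants for $\psi$ viewed in $\mathbb{C}_v[z]$: writing $\psi(z)=b_d z^d+\cdots+b_0=b_d(z-\beta_1)\cdots(z-\beta_d)$ with $\beta_i\in\mathbb{C}_v$, $A=\max_i|\beta_i|_v$, $B=|b_d|_v^{-1/d}$, set $c_v=\max\{1,A,B\}$, $C_v=\max\{1,|b_0|_v,\ldots,|b_d|_v\}$ if $v$ is non-archimedean, and $c_v=\max\{1,A+B\}$, $C_v=\max\{1,|b_0|_v+\cdots+|b_d|_v\}$ if $v$ is archimedean. Then $$-\frac{1}{d^n}\tilde{c}(\phi,e)\leq \hat{h}_{\phi}(x)-\frac{1}{e\,d^n}h\Big(a\big(\phi^n(x)\big)^e\Big)\leq\frac{1}{d^n}\tilde{C}(\phi,e)$$ for all $x\in\mathbb{Q}$ and all integers $n\geq 0$, where $$\tilde{c}(\phi,e)=\frac{d}{d-1}\sum_{v\ \text{bad}}\log c_v,\qquad \tilde{C}(\phi,e)=\frac{1}{d-1}\sum_{v\ \text{bad}}\log C_v.$$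
   Context: $M_{\mathbb{Q}}=\{|\cdot|_\infty,|\cdot|_2,|\cdot|_3,|\cdot|_5,\ldots\}$ is the set of standard absolute values (places) of $\mathbb{Q}$, normalized so that the product formula holds. For $v\in M_{\mathbb{Q}}$, $\mathbb{C}_v$ is the completion of an algebraic closure of $\mathbb{Q}_v$, and $\overline{\mathbb{Q}}$ is regarded as a subfield of $\mathbb{C}_v$ via a fixed embedding. The height of $x=m/n\in\mathbb{Q}$ in lowest terms is $h(x)=\log\max\{|m|,|n|\}$. For $\phi\in\mathbb{Q}[z]$ of degree $d\ge2$, the canonical height is $\hat{h}_\phi(x)=\lim_{n\to\infty}d^{-n}h(\phi^n(x))$, where $\phi^n$ is the $n$-th iterate. A polynomial $\phi(z)=a_dz^d+\cdots+a_0$ of degree $d\geq 2$ has good reduction at $v$ if $v$ is non-archimedean, $|a_i|_v\leq 1$ for all $i$, and $|a_d|_v=1$; otherwise it has bad reduction at $v$ (in particular the archimedean place is always bad). *)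

From HB Require Import structures.
From mathcomp Require Import all_boot all_order all_algebra.
From mathcomp Require Import all_classical all_reals all_analysis.
Set Implicit Arguments. Unset Strict Implicit. Unset Printing Implicit Defensive.
Import Order.TTheory GRing.Theory Num.Theory numFieldNormedType.Exports.
Local Open Scope ring_scope.

Definition padic_abs (p : nat) (x : rat) : rat :=
  if x == 0 then 0
  else exprz (p%:R : rat)
         (Posz (logn p `|denq x|%N) - Posz (logn p `|numq x|%N)).

Definition arch_abs (x : rat) : rat := `|x|.

(* Plays the role of C_v (only absolute values of algebraic elements matter). *)
Record vclosure (R : realType) (absQ : rat -> rat) := VClosure {
  vc_field : closedFieldType;
  vc_abs : vc_field -> R;
  vc_abs_ge0 : forall x, 0 <= vc_abs x;
  vc_abs_eq0 : forall x, (vc_abs x == 0) = (x == 0);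
  vc_absM : forall x y, vc_abs (x * y) = vc_abs x * vc_abs y;
  vc_absD : forall x y, vc_abs (x + y) <= vc_abs x + vc_abs y;
  vc_absQ : forall q : rat, vc_abs (ratr q) = ratr (absQ q) }.

Definition pdeg (phi : {poly rat}) : nat := (size phi).-1.

Definition bad_at (p : nat) (phi : {poly rat}) : bool :=
  ~~ ((all (fun c => padic_abs p c <= 1) phi)
      && (padic_abs p (lead_coef phi) == 1)).

(* Every prime of bad reduction divides this number (denominators of the
   coefficients times the numerator of the lead coefficient). *)
Definition bad_bound (phi : {poly rat}) : nat :=
  ((\prod_(i < size phi) `|denq phi`_i|%N) * `|numq (lead_coef phi)|%N)%N.

Definition bad_primes (phi : {poly rat}) : seq nat :=
  [seq p <- primes (bad_bound phi) | bad_at p phi].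

Definition psi_poly (K : closedFieldType) (phi : {poly rat}) (g : K) : {poly K} :=
  g *: ((map_poly ratr phi) \Po (g^-1 *: 'X)).

Definition roots_seq (K : closedFieldType) (q : {poly K}) : seq K :=
  sval (closed_field_poly_normal q).

Section Constants.
Variables (R : realType) (absQ : rat -> rat) (Kv : vclosure R absQ).
Variables (phi : {poly rat}) (g : vc_field Kv).

Let psi := psi_poly phi g.
Let d := pdeg phi.
Let absv := @vc_abs R absQ Kv.

Definition cA : R := \big[Num.max/0]_(z <- roots_seq psi) absv z.
Definition cB : R := (absv psi`_d) `^ (- (d%:R)^-1).

Definition c_nonarch : R := Num.max 1 (Num.max cA cB).
Definition C_nonarch : R := Num.max 1 (\big[Num.max/0]_(i < d.+1) absv psi`_i).
Definition c_arch : R := Num.max 1 (cA + cB).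
Definition C_arch : R := Num.max 1 (\sum_(i < d.+1) absv psi`_i).
End Constants.

Definition height (R : realType) (x : rat) : R :=
  ln (Num.max (`|numq x|%:~R) (`|denq x|%:~R)).

Definition canonical_height (R : realType) (phi : {poly rat}) (x : rat) : R :=
  limn (fun n : nat => height R (iter n (fun y => phi.[y]) x)
                       / ((pdeg phi)%:R ^+ n)).

(* c~(phi,e) and C~(phi,e): the archimedean place is always bad. *)
Definition ctilde (R : realType) (phi : {poly rat})
  (Kinf : vclosure R arch_abs) (Kp : forall p : nat, vclosure R (padic_abs p))
  (ginf : vc_field Kinf) (gp : forall p, vc_field (Kp p)) : R :=
  (pdeg phi)%:R / ((pdeg phi)%:R - 1) *
  (ln (c_arch phi ginf) + \sum_(p <- bad_primes phi) ln (c_nonarch phi (gp p))).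

Definition Ctilde (R : realType) (phi : {poly rat})
  (Kinf : vclosure R arch_abs) (Kp : forall p : nat, vclosure R (padic_abs p))
  (ginf : vc_field Kinf) (gp : forall p, vc_field (Kp p)) : R :=
  1 / ((pdeg phi)%:R - 1) *
  (ln (C_arch phi ginf) + \sum_(p <- bad_primes phi) ln (C_nonarch phi (gp p))).

From HB Require Import structures.
From mathcomp Require Import all_boot all_order all_algebra.
From mathcomp Require Import all_classical all_reals all_analysis.
From mathcomp Require Import ring lra.
Set Implicit Arguments. Unset Strict Implicit. Unset Printing Implicit Defensive.
Import Order.TTheory GRing.Theory Num.Theory numFieldNormedType.Exports.
Local Open Scope ring_scope.

(* Put y_k = phi^k(x) and s_k = h(a y_k^e) / e.  At a place v, psi = gamma phi(gamma^-1 z)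
   maps gamma y to gamma phi(y), and factoring psi over C_v bounds
   log+ |psi(w)|_v - d log+ |w|_v between -d log c_v and log C_v; at a place of good
   reduction |gamma|_v = 1 and the difference vanishes (this uses the ultrametric
   inequality, which follows from |n|_p <= 1 on integers).  Since h(y) is the sum of the
   local terms log+ |y|_v, summing over places gives -d c <= s_(k+1) - d s_k <= C, and
   |h(y_k) - s_k| stays bounded because gamma rescales each local term by a fixed factor.
   Tate's telescoping argument then bounds lim h(y_k) / d^k - s_n / d^n. *)

Lemma bernoulli_ler (R : realFieldType) (t : R) n :
  0 <= t -> 1 + t *+ n <= (1 + t) ^+ n.
Proof.
move=> t0; elim: n => [|n IH]; first by rewrite mulr0n expr0 addr0.
rewrite exprSr mulrSr.
have tn0 : 0 <= t *+ n by rewrite mulrn_wge0.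
apply: le_trans (ler_wpM2r _ IH); last by lra.
by have := mulr_ge0 tn0 t0; nra.
Qed.

(* If t > M, then (t / M)^n grows geometrically, faster than n + 1. *)
Lemma ler_of_pow_le_linear (R : realType) (t M : R) : 0 <= t -> 0 <= M ->
  (forall n : nat, t ^+ n <= n.+1%:R * M ^+ n) -> t <= M.
Proof.
move=> t0 M0 H; rewrite leNgt; apply/negP => Mt.
have M_gt0 : 0 < M.
  rewrite lt_neqAle M0 andbT; apply/eqP=> M_eq0.
  by have := H 1%N; rewrite -M_eq0 !expr1 mulr0; lra.
pose eps := t / M - 1.
have eps_gt0 : 0 < eps by rewrite subr_gt0 ltr_pdivlMr // mul1r.
have growth n : (1 + eps) ^+ n <= n.+1%:R.
  by rewrite /eps addrC subrK expr_div_n ler_pdivrMr ?exprn_gt0 ?H.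
pose k := Num.Def.archi_bound (3 / eps ^+ 2).
have k_big : 3 / eps ^+ 2 < k%:R.
  by apply: archi_boundP; rewrite divr_ge0 ?exprn_ge0 // ltW.
have sq_le : (1 + eps *+ k) ^+ 2 <= (1 + eps) ^+ (k + k).
  have base_ge0 : 0 <= 1 + eps *+ k by rewrite addr_ge0 // mulrn_wge0 // ltW.
  rewrite exprD -expr2; apply: lerXn2r; rewrite ?nnegrE ?bernoulli_ler ?(ltW eps_gt0) //.
  by rewrite exprn_ge0 //; lra.
have := le_trans sq_le (growth (k + k)%N).
rewrite -mulr_natr -[(k + k).+1]addn1 !natrD.
move: k_big; rewrite ltr_pdivrMr ?exprn_gt0 // expr2.
have : 0 <= (k%:R : R) by [].
by nra.
Qed.

Section AbsoluteValue.
Variables (R : realType) (absQ : rat -> rat) (K : vclosure R absQ).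
Local Notation F := (vc_field K).
Local Notation N := (@vc_abs R absQ K).

Lemma vc_abs0 : N 0 = 0.
Proof. by apply/eqP; rewrite vc_abs_eq0. Qed.

Lemma vc_abs1 : N 1 = 1.
Proof.
have N1_neq0 : N 1 != 0 by rewrite vc_abs_eq0 oner_eq0.
by apply: (mulfI N1_neq0); rewrite -vc_absM !mulr1.
Qed.

Lemma vc_absX (x : F) n : N (x ^+ n) = N x ^+ n.
Proof. by elim: n => [|n IH]; rewrite ?expr0 ?vc_abs1 // !exprS vc_absM IH. Qed.

Lemma vc_absN (x : F) : N (- x) = N x.
Proof.
have Nm1 : N (-1) = 1.
  apply/eqP; rewrite -(@pexpr_eq1 _ _ 2) ?vc_abs_ge0 //.
  by rewrite -vc_absX sqrrN expr1n vc_abs1.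
by rewrite -mulN1r vc_absM Nm1 mul1r.
Qed.

Lemma vc_absV (x : F) : x != 0 -> N x^-1 = (N x)^-1.
Proof.
move=> x0; have Nx0 : N x != 0 by rewrite vc_abs_eq0.
by apply: (mulfI Nx0); rewrite -vc_absM !mulfV // vc_abs1.
Qed.

Lemma vc_abs_gt0 (x : F) : x != 0 -> 0 < N x.
Proof. by move=> x0; rewrite lt_neqAle vc_abs_ge0 andbT eq_sym vc_abs_eq0. Qed.

Lemma ler_vc_absB (x y : F) : N x - N y <= N (x - y).
Proof. by rewrite lerBlDr; have := vc_absD (x - y) y; rewrite subrK. Qed.

Lemma ler_vc_abs_sum (I : Type) (r : seq I) (f : I -> F) :
  N (\sum_(i <- r) f i) <= \sum_(i <- r) N (f i).
Proof.
elim: r => [|i r IH]; first by rewrite !big_nil vc_abs0.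
by rewrite !big_cons (le_trans (vc_absD _ _)) ?lerD.
Qed.

Lemma vc_abs_prod (I : Type) (r : seq I) (f : I -> F) :
  N (\prod_(i <- r) f i) = \prod_(i <- r) N (f i).
Proof.
elim: r => [|i r IH]; first by rewrite !big_nil vc_abs1.
by rewrite !big_cons vc_absM IH.
Qed.

Section Ultrametric.
Hypothesis absQ_nat_le1 : forall n : nat, absQ n%:R <= 1.

Lemma vc_abs_nat_le1 (n : nat) : N n%:R <= 1.
Proof. by rewrite -(ratr_nat F) vc_absQ -(rmorph1 (@ratr R)) ler_rat. Qed.

(* Expand (x + y)^n: integers have absolute value at most 1, so each of the
   n + 1 binomial terms is bounded by max(|x|, |y|)^n. *)
Lemma vc_absD_max (x y : F) : N (x + y) <= Num.max (N x) (N y).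
Proof.
set M := Num.max (N x) (N y).
have Nx_le : N x <= M by rewrite le_max lexx.
have Ny_le : N y <= M by rewrite le_max lexx orbT.
have M0 : 0 <= M := le_trans (vc_abs_ge0 x) Nx_le.
apply: ler_of_pow_le_linear; rewrite ?vc_abs_ge0 // => n.
rewrite -vc_absX exprDn; apply: le_trans (ler_vc_abs_sum _ _) _.
have term_le (i : 'I_n.+1) : N (x ^+ (n - i) * y ^+ i *+ 'C(n, i)) <= M ^+ n.
  rewrite -mulr_natr !vc_absM !vc_absX.
  have -> : M ^+ n = M ^+ (n - i) * M ^+ i * 1 by rewrite mulr1 -exprD subnK // -ltnS.
  apply: ler_pM; rewrite ?vc_abs_nat_le1 ?mulr_ge0 ?exprn_ge0 ?vc_abs_ge0 //.
  by apply: ler_pM; rewrite ?exprn_ge0 ?vc_abs_ge0 ?lerXn2r ?nnegrE ?vc_abs_ge0.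
apply: le_trans (ler_sum _ (fun i _ => term_le i)) _.
by rewrite sumr_const card_ord mulr_natl.
Qed.

Lemma vc_absD_dominant (a b : F) : N b < N a -> N (a + b) = N a.
Proof.
move=> Nba; apply/eqP; rewrite eq_le (le_trans (vc_absD_max _ _)) ?ge_max ?lexx ?(ltW Nba) //=.
have := vc_absD_max (a + b) (- b).
by rewrite addrK vc_absN le_max [N a <= N b]leNgt Nba orbF.
Qed.

Lemma vc_abs_sum_le_max (I : Type) (r : seq I) (f : I -> F) (X : R) : 0 <= X ->
  (forall i, N (f i) <= X) -> N (\sum_(i <- r) f i) <= X.
Proof.
move=> X0 Hf; elim: r => [|i r IH]; first by rewrite big_nil vc_abs0.
by rewrite big_cons (le_trans (vc_absD_max _ _)) // ge_max Hf.
Qed.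

End Ultrametric.
End AbsoluteValue.

Lemma prodr_const_seq (R : pzSemiRingType) (I : Type) (r : seq I) (x : R) :
  \prod_(i <- r) x = x ^+ size r.
Proof. by elim: r => [|i r IH]; rewrite ?big_nil ?expr0 // big_cons IH exprS. Qed.

Section MaxOne.
Variable R : realDomainType.
Implicit Types t u : R.

Lemma max1_ge1 t : 1 <= Num.max 1 t. Proof. by rewrite le_max lexx. Qed.
Lemma max1_ge t : t <= Num.max 1 t. Proof. by rewrite le_max lexx orbT. Qed.
Lemma max1_gt0 t : 0 < Num.max 1 t. Proof. exact: lt_le_trans ltr01 (max1_ge1 t). Qed.

Lemma max1X t n : 0 <= t -> Num.max 1 (t ^+ n) = Num.max 1 t ^+ n.
Proof.
move=> t0; have [t_le1|t_gt1] := leP t 1.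
  by rewrite expr1n max_l // exprn_ile1.
by rewrite max_r ?exprn_ege1 // ltW.
Qed.

Lemma max1M_le t u : 0 <= t -> 0 <= u ->
  Num.max 1 (t * u) <= Num.max 1 t * Num.max 1 u.
Proof.
move=> t0 u0; rewrite ge_max; apply/andP; split.
  by rewrite -[1 in X in X <= _]mulr1 ler_pM ?max1_ge1.
by rewrite ler_pM ?max1_ge.
Qed.

End MaxOne.

Section PolynomialBounds.
Variables (R : realType) (absQ : rat -> rat) (K : vclosure R absQ).
Local Notation F := (vc_field K).
Local Notation N := (@vc_abs R absQ K).
Implicit Types (q : {poly F}) (w : F).

Lemma roots_seqE q : q = lead_coef q *: \prod_(z <- roots_seq q) ('X - z%:P).
Proof. by rewrite /roots_seq; case: (closed_field_poly_normal q). Qed.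

Lemma size_roots_seq q d : size q = d.+1 -> size (roots_seq q) = d.
Proof.
move=> qd; have lq0 : lead_coef q != 0 by rewrite lead_coef_eq0 -size_poly_eq0 qd.
by move: qd; rewrite {1}(roots_seqE q) size_scale // size_prod_XsubC => -[].
Qed.

Lemma horner_roots_seq q w : q.[w] = lead_coef q * \prod_(z <- roots_seq q) (w - z).
Proof.
rewrite {1}(roots_seqE q) hornerZ horner_prod.
by congr (_ * _); apply: eq_bigr => z _; rewrite hornerXsubC.
Qed.

Definition root_radius q : R := \big[Num.max/0]_(z <- roots_seq q) N z.

Definition lead_scale q d : R := N q`_d `^ (- (d%:R)^-1).

Lemma root_radius_ge q z : z \in roots_seq q -> N z <= root_radius q.
Proof. by move=> qz; apply: le_bigmax_seq. Qed.

Lemma root_radius_ge0 q : 0 <= root_radius q.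
Proof.
rewrite /root_radius; elim: (roots_seq q) => [|z r IH]; rewrite ?big_nil ?big_cons //.
by rewrite le_max IH orbT.
Qed.

Lemma lead_scale_ge0 q d : 0 <= lead_scale q d.
Proof. exact: powR_ge0. Qed.

Lemma lead_scale_pow q d : (0 < d)%N -> q`_d != 0 -> lead_scale q d ^+ d * N q`_d = 1.
Proof.
move=> d_gt0 qd0; have Nqd_gt0 := vc_abs_gt0 qd0.
rewrite /lead_scale -powR_mulrn ?powR_ge0 // -powRrM mulNr mulVf ?pnatr_eq0 -?lt0n //.
by rewrite powR_inv1 ?ltW // mulVf // gt_eqF.
Qed.

Lemma lead_coef_pow_le_horner q d w (A' : R) : size q = d.+1 ->
  (forall z, z \in roots_seq q -> 0 <= N w - A' <= N (w - z)) ->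
  N q`_d * (N w - A') ^+ d <= N q.[w].
Proof.
move=> qd root_gap; rewrite horner_roots_seq lead_coefE qd vc_absM vc_abs_prod.
apply: ler_wpM2l; first exact: vc_abs_ge0.
rewrite -(size_roots_seq qd) -prodr_const_seq !big_seq; apply: ler_prod => z qz.
exact: root_gap.
Qed.

(* Shared by the archimedean (A' = root radius) and non-archimedean (A' = 0)
   lower bounds. *)
Lemma max1_pow_le_horner q d w (A' c : R) :
  size q = d.+1 -> (0 < d)%N -> 0 <= A' -> 1 <= c -> A' + lead_scale q d <= c ->
  (forall z, z \in roots_seq q -> c < N w -> N w - A' <= N (w - z)) ->
  Num.max 1 (N w) ^+ d <= c ^+ d * Num.max 1 (N q.[w]).
Proof.
move=> qd d_gt0 A'0 c1 cAB root_gap; have c0 : 0 <= c by lra.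
have [Nw_le|Nw_gt] := leP (N w) c.
  apply: le_trans (_ : c ^+ d <= _).
    by apply: lerXn2r; rewrite ?nnegrE ?c0 ?(ltW (max1_gt0 _)) // ge_max c1 Nw_le.
  by rewrite -{1}[c ^+ d]mulr1 ler_wpM2l ?exprn_ge0 ?max1_ge1.
rewrite max_r; last by lra.
have qd0 : q`_d != 0.
  by rewrite -[d]/(d.+1.-1) -qd -lead_coefE lead_coef_eq0 -size_poly_eq0 qd.
have BqN := lead_scale_pow d_gt0 qd0; have B0 := lead_scale_ge0 q d.
set B := lead_scale q d in cAB BqN B0.
have lower : N q`_d * (N w - A') ^+ d <= N q.[w].
  apply: lead_coef_pow_le_horner => // z qz.
  by rewrite root_gap // andbT subr_ge0; lra.
have BNw : (B * N w) ^+ d <= (c * (N w - A')) ^+ d.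
  have h1 : 0 <= A' * (N w - c) by rewrite mulr_ge0 // subr_ge0 ltW.
  have h2 : 0 <= (c - A' - B) * N w by rewrite mulr_ge0 ?vc_abs_ge0 //; lra.
  have h3 : 0 <= B * N w by rewrite mulr_ge0 ?vc_abs_ge0.
  by apply: lerXn2r; rewrite ?nnegrE //; nra.
rewrite -[N w ^+ d]mul1r -{1}BqN mulrAC -exprMn mulrC.
apply: le_trans (ler_wpM2l (vc_abs_ge0 _) BNw) _.
rewrite exprMn mulrCA ler_wpM2l ?exprn_ge0 //.
exact: le_trans lower (max1_ge _).
Qed.

Lemma max1_horner_le q d w (M : R) :
  size q = d.+1 -> 0 <= M -> N q.[w] <= M * Num.max 1 (N w) ^+ d ->
  Num.max 1 (N q.[w]) <= Num.max 1 M * Num.max 1 (N w) ^+ d.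
Proof.
move=> qd M0 qM; have m1 : 1 <= Num.max 1 (N w) ^+ d by rewrite exprn_ege1 ?max1_ge1.
rewrite ge_max; apply/andP; split.
  by rewrite -[1 in X in X <= _]mulr1 ler_pM ?ler01 ?max1_ge1.
by apply: le_trans qM _; rewrite ler_wpM2r ?(le_trans ler01 m1) ?max1_ge.
Qed.

Lemma vc_abs_monomial_le q d w (i : 'I_d.+1) (M : R) : N q`_i <= M ->
  N (q`_i * w ^+ i) <= M * Num.max 1 (N w) ^+ d.
Proof.
move=> qiM; rewrite vc_absM vc_absX; apply: ler_pM; rewrite ?exprn_ge0 ?vc_abs_ge0 //.
apply: le_trans (_ : Num.max 1 (N w) ^+ i <= _).
  by apply: lerXn2r; rewrite ?nnegrE ?vc_abs_ge0 ?(ltW (max1_gt0 _)) ?max1_ge.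
by apply: ler_weXn2l; [exact: max1_ge1 | rewrite -ltnS].
Qed.

Lemma max1_horner_le_sum q d w : size q = d.+1 ->
  Num.max 1 (N q.[w])
    <= Num.max 1 (\sum_(i < d.+1) N q`_i) * Num.max 1 (N w) ^+ d.
Proof.
move=> qd; apply: max1_horner_le => //; first by rewrite sumr_ge0 // => i _; apply: vc_abs_ge0.
rewrite horner_coef qd mulr_suml; apply: le_trans (ler_vc_abs_sum _ _) _.
by apply: ler_sum => i _; apply: vc_abs_monomial_le.
Qed.

Lemma max1_pow_le_horner_arch q d w : size q = d.+1 -> (0 < d)%N ->
  Num.max 1 (N w) ^+ d
    <= Num.max 1 (root_radius q + lead_scale q d) ^+ d * Num.max 1 (N q.[w]).
Proof.
move=> qd d_gt0; apply: (max1_pow_le_horner qd d_gt0 (root_radius_ge0 q));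
  rewrite ?max1_ge1 ?max1_ge // => z qz _.
by apply: le_trans (ler_vc_absB _ _); rewrite lerB // root_radius_ge.
Qed.

Section NonArchimedean.
Hypothesis absQ_nat_le1 : forall n : nat, absQ n%:R <= 1.

Lemma max1_horner_le_max q d w : size q = d.+1 ->
  Num.max 1 (N q.[w])
    <= Num.max 1 (\big[Num.max/0]_(i < d.+1) N q`_i) * Num.max 1 (N w) ^+ d.
Proof.
move=> qd; set M := \big[Num.max/0]_(i < d.+1) N q`_i.
have M_ge (i : 'I_d.+1) : N q`_i <= M by exact: (le_bigmax 0 (fun i : 'I_d.+1 => N q`_i)).
apply: max1_horner_le => //; first exact: le_trans (vc_abs_ge0 _) (M_ge ord0).
have bound_ge0 : 0 <= M * Num.max 1 (N w) ^+ d.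
  by rewrite mulr_ge0 ?exprn_ge0 ?(le_trans (vc_abs_ge0 _) (M_ge ord0)) ?(ltW (max1_gt0 _)).
rewrite horner_coef qd; apply: (vc_abs_sum_le_max absQ_nat_le1 _ bound_ge0) => i.
exact: vc_abs_monomial_le (M_ge i).
Qed.

Lemma max1_pow_le_horner_nonarch q d w : size q = d.+1 -> (0 < d)%N ->
  Num.max 1 (N w) ^+ d
    <= Num.max 1 (Num.max (root_radius q) (lead_scale q d)) ^+ d * Num.max 1 (N q.[w]).
Proof.
move=> qd d_gt0; apply: (max1_pow_le_horner qd d_gt0 (lexx 0)).
- exact: max1_ge1.
- by rewrite add0r le_max [_ <= Num.max _ _]le_max lexx !orbT.
move=> z qz Nw_gt; rewrite subr0.
have Nz_lt : N (- z) < N w.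
  rewrite vc_absN; apply: le_lt_trans Nw_gt; apply: le_trans (root_radius_ge qz) _.
  by rewrite le_max le_max lexx orbT.
by rewrite (vc_absD_dominant absQ_nat_le1 Nz_lt).
Qed.

(* With integral coefficients and unit leading coefficient, the leading
   monomial dominates as soon as |w| > 1. *)
Lemma max1_horner_good q d w : size q = d.+1 -> (0 < d)%N ->
  (forall i, N q`_i <= 1) -> N q`_d = 1 ->
  Num.max 1 (N q.[w]) = Num.max 1 (N w) ^+ d.
Proof.
move=> qd d_gt0 q_le1 qd1; have [Nw_le1|Nw_gt1] := leP (N w) 1.
  rewrite expr1n max_l // horner_coef qd.
  apply: (vc_abs_sum_le_max absQ_nat_le1) => // i; rewrite vc_absM vc_absX -[1]mulr1.
  by rewrite ler_pM ?exprn_ge0 ?vc_abs_ge0 ?exprn_ile1 ?vc_abs_ge0.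
rewrite horner_coef qd big_ord_recr /= addrC.
have lead_abs : N (q`_d * w ^+ d) = N w ^+ d by rewrite vc_absM qd1 mul1r vc_absX.
have lower_lt : N (\sum_(i < d) q`_i * w ^+ i) < N (q`_d * w ^+ d).
  rewrite lead_abs; apply: le_lt_trans (_ : N w ^+ d.-1 < _); last first.
    by rewrite -{2}(prednK d_gt0) exprS ltr_pMl ?exprn_gt0 // (lt_trans ltr01).
  apply: (vc_abs_sum_le_max absQ_nat_le1) => [|i].
    by rewrite exprn_ge0 // ltW // (lt_trans ltr01).
  rewrite vc_absM vc_absX -[N w ^+ d.-1]mul1r ler_pM ?vc_abs_ge0 ?exprn_ge0 //.
    exact: ltW (lt_trans ltr01 Nw_gt1).
  by apply: ler_weXn2l; [exact: ltW | rewrite -ltnS prednK].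
by rewrite (vc_absD_dominant absQ_nat_le1 lower_lt) lead_abs max_r // exprn_ege1 // ltW.
Qed.

End NonArchimedean.
End PolynomialBounds.

(* The library makes ratr a ring morphism only into a numFieldType, while vc_field K is
   just a closedFieldType: characteristic 0 has to be used explicitly. *)
Section RatrCharZero.
Variable F : fieldType.
Hypothesis F_char0 : [pchar F] =i pred0.

Lemma intrf_eq0 (z : int) : (z%:~R == 0 :> F) = (z == 0).
Proof.
have natf_eq0 := (pcharf0P F).1 F_char0.
by case: z => n; rewrite ?NegzE ?mulrNz ?oppr_eq0 natf_eq0.
Qed.

Lemma ratr_frac (n d : int) : d != 0 -> ratr (n%:~R / d%:~R : rat) = n%:~R / d%:~R :> F.
Proof.
move=> d0; set x : rat := n%:~R / d%:~R.
have cross : numq x * d = n * denq x.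
  apply: (@intr_inj rat); rewrite !intrM numqE /x mulrAC divfK //.
  by rewrite intr_eq0.
by rewrite /ratr; apply/eqP; rewrite eqr_div ?intrf_eq0 ?denq_neq0 // -!intrM cross.
Qed.

Fact ratr_char0_zmod_morphism : zmod_morphism (@ratr F).
Proof.
move=> x y; have dx := denq_neq0 x; have dy := denq_neq0 y.
have -> : x - y = (numq x * denq y - numq y * denq x)%:~R / (denq x * denq y)%:~R.
  rewrite -{1}[x]divq_num_den -{1}[y]divq_num_den !(intrM, intrB); field.
  by rewrite !intr_eq0 dx dy.
rewrite ratr_frac ?mulf_neq0 // /ratr !(intrM, intrB); field.
by rewrite !intrf_eq0 dx dy.
Qed.

Fact ratr_char0_monoid_morphism : monoid_morphism (@ratr F).
Proof.
split=> [|x y]; first by rewrite /ratr divr1.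
have dx := denq_neq0 x; have dy := denq_neq0 y.
have -> : x * y = (numq x * numq y)%:~R / (denq x * denq y)%:~R.
  rewrite -{1}[x]divq_num_den -{1}[y]divq_num_den !intrM; field.
  by rewrite !intr_eq0 dx dy.
rewrite ratr_frac ?mulf_neq0 // /ratr !intrM; field.
by rewrite !intrf_eq0 dx dy.
Qed.

Definition ratr_char0 : {rmorphism rat -> F} :=
  HB.pack (@ratr F)
    (GRing.isZmodMorphism.Build rat F (@ratr F) ratr_char0_zmod_morphism)
    (GRing.isMonoidMorphism.Build rat F (@ratr F) ratr_char0_monoid_morphism).

End RatrCharZero.

Lemma vc_field_char0 (R : realType) (absQ : rat -> rat) (K : vclosure R absQ) :
  (forall q, q != 0 -> absQ q != 0) -> [pchar vc_field K] =i pred0.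
Proof.
move=> absQ_neq0; apply/pcharf0P => -[|n]; first by rewrite mulr0n !eqxx.
rewrite -vc_abs_eq0 -(ratr_nat (vc_field K)) vc_absQ fmorph_eq0.
by apply/negbTE/absQ_neq0; rewrite pnatr_eq0.
Qed.

Definition log_plus (R : realType) (t : R) : R := ln (Num.max 1 t).

Section LogPlus.
Variable R : realType.
Implicit Types t u : R.

Lemma log_plus_ge0 t : 0 <= log_plus t.
Proof. exact/ln_ge0/max1_ge1. Qed.

Lemma log_plusX t n : 0 <= t -> log_plus (t ^+ n) = n%:R * log_plus t.
Proof. by move=> t0; rewrite /log_plus max1X // lnXn ?max1_gt0 // mulr_natl. Qed.

Lemma log_plusM_le t u : 0 <= t -> 0 <= u ->
  log_plus (t * u) <= log_plus t + log_plus u.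
Proof.
move=> t0 u0; rewrite /log_plus -lnM ?posrE ?max1_gt0 //.
by rewrite ler_ln ?posrE ?mulr_gt0 ?max1_gt0 // max1M_le.
Qed.

Lemma ln_prod_natr (I : eqType) (r : seq I) (f : I -> nat) :
  (forall i, i \in r -> (0 < f i)%N) ->
  ln (\prod_(i <- r) (f i)%:R : R) = \sum_(i <- r) ln ((f i)%:R : R).
Proof.
elim: r => [|i r IH] f_gt0; first by rewrite !big_nil ln1.
have f_gt0' j : j \in r -> (0 < f j)%N by move=> jr; rewrite f_gt0 // in_cons jr orbT.
rewrite !big_cons lnM ?IH // posrE ?ltr0n ?f_gt0 ?mem_head // big_seq prodr_gt0 // => j jr.
by rewrite ltr0n f_gt0'.
Qed.

Lemma sum_logn_ln (S : seq nat) (D : nat) : (0 < D)%N -> uniq S ->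
  {subset primes D <= S} ->
  \sum_(p <- S) (logn p D)%:R * ln (p%:R : R) = ln (D%:R : R).
Proof.
move=> D_gt0 uS DS.
rewrite (bigID (fun p => p \in primes D)) /= [X in _ + X]big1 ?addr0; last first.
  move=> p pD; rewrite (_ : logn p D = 0%N) ?mul0r //.
  by apply/eqP; rewrite -leqn0 leqNgt logn_gt0.
rewrite -big_filter (perm_big (primes D)); last first.
  apply: uniq_perm; rewrite ?filter_uniq ?primes_uniq // => p.
  by rewrite mem_filter; case pD: (p \in primes D) => //=; exact: DS.
rewrite [in RHS](prod_prime_decomp D_gt0) prime_decompE big_map /= natr_prod.
rewrite ln_prod_natr => [|p]; last first.
  by rewrite mem_primes => /and3P [p_pr _ _]; rewrite expn_gt0 prime_gt0.
rewrite big_seq [RHS]big_seq; apply: eq_bigr => p; rewrite mem_primes => /and3P [p_pr _ _].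
by rewrite natrX lnXn ?ltr0n ?prime_gt0 // mulr_natl.
Qed.

(* numq q and denq q are coprime, so p divides at most one of them. *)
Lemma log_plus_padic_abs (p : nat) (q : rat) : prime p ->
  log_plus (ratr (padic_abs p q) : R) = (logn p `|denq q|)%:R * ln (p%:R : R).
Proof.
move=> p_pr; rewrite /log_plus /padic_abs.
have [->|q0] := eqVneq q 0; first by rewrite rmorph0 max_l // ln1 logn1 mul0r.
set a := logn p `|denq q|; set b := logn p `|numq q|.
have p_gt1 : (1 : rat) <= p%:R by rewrite ler1n prime_gt0.
have [a0|a_gt0] := posnP a.
  rewrite a0 sub0r -exprnN max_l ?ln1 ?mul0r // -(rmorph1 (@ratr R)) ler_rat.
  by rewrite invf_le1 ?exprn_gt0 ?exprn_ege1 // (lt_le_trans ltr01).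
have b0 : b = 0%N.
  apply/eqP; rewrite -leqn0 leqNgt; apply/negP => b_gt0.
  move: a_gt0 b_gt0; rewrite !logn_gt0 !mem_primes => /and3P [_ _ pd] /and3P [_ _ pn].
  have : (p %| gcdn `|numq q| `|denq q|)%N by rewrite dvdn_gcd pn pd.
  by rewrite (eqP (coprime_num_den q)) dvdn1 => /eqP p1; rewrite p1 in p_pr.
rewrite b0 subr0 -exprnP rmorphXn /= ratr_nat max_r ?exprn_ege1 ?ler1n ?prime_gt0 //.
by rewrite lnXn ?ltr0n ?prime_gt0 // mulr_natl.
Qed.

Lemma height_sum_places (q : rat) (S : seq nat) : uniq S -> all prime S ->
  {subset primes `|denq q| <= S} ->
  height R q = log_plus (ratr (arch_abs q) : R)
               + \sum_(p <- S) log_plus (ratr (padic_abs p q) : R).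
Proof.
move=> uS S_pr qS.
rewrite big_seq (eq_bigr (fun p => (logn p `|denq q|)%:R * ln (p%:R : R))); last first.
  by move=> p pS; rewrite log_plus_padic_abs //; move/allP: S_pr; apply.
rewrite -big_seq sum_logn_ln //; last by rewrite absz_gt0 denq_eq0.
set n : R := `|numq q|%:~R; set D : R := (`|denq q|%N)%:R.
have D_gt0 : 0 < D by rewrite ltr0n absz_gt0 denq_eq0.
have eD : (`|denq q|%:~R : R) = D by rewrite -abszE.
have arch_q : (ratr (arch_abs q) : R) = n / D.
  by rewrite /arch_abs ratr_norm /ratr normrM normfV -!intr_norm -eD.
rewrite /height /log_plus -/n eD arch_q addrC -lnM ?posrE ?max1_gt0 //; congr (ln _).
have n0 : 0 <= n by rewrite ler0z normr_ge0.
have [nD|Dn] := leP n D; first by rewrite max_l ?mulr1 // ler_pdivrMr // mul1r.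
rewrite max_r; first by rewrite mulrC divfK // gt_eqF.
by rewrite ler_pdivlMr // mul1r ltW.
Qed.

End LogPlus.

Section Conjugate.
Variables (F : closedFieldType) (F_char0 : [pchar F] =i pred0).
Variables (phi : {poly rat}) (g : F).
Hypothesis g0 : g != 0.
Local Notation ratrF := (ratr_char0 F_char0).

Lemma coef_psi_poly i : (psi_poly phi g)`_i = g * (ratr phi`_i * g^-1 ^+ i).
Proof.
rewrite /psi_poly coefZ; congr (_ * _).
set p := map_poly ratr phi.
have -> : p \Po (g^-1 *: 'X) = \poly_(j < size p) (p`_j * g^-1 ^+ j).
  by rewrite comp_polyE poly_def; apply: eq_bigr => j _; rewrite exprZn scalerA.
rewrite coef_poly; case: ltnP => [ip|pi]; first by rewrite /p coef_map_id0 // /ratr mul0r.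
have phi_i : (size phi <= i)%N by rewrite -(size_map_poly ratrF).
by rewrite nth_default // (rmorph0 ratrF) mul0r.
Qed.

Lemma size_psi_poly : size (psi_poly phi g) = size phi.
Proof.
rewrite /psi_poly size_scale // size_comp_poly2; first exact: (size_map_poly ratrF).
by rewrite size_scale ?size_polyX // invr_eq0.
Qed.

Lemma horner_psi_poly (y : rat) : (psi_poly phi g).[g * ratr y] = g * ratr phi.[y].
Proof.
by rewrite /psi_poly hornerZ horner_comp hornerZ hornerX mulKf // (horner_map ratrF).
Qed.

End Conjugate.

Lemma ln_bounds_of_pow_bounds (R : realType) (X m C c : R) (d : nat) :
  1 <= X -> 1 <= m -> 1 <= C -> 1 <= c ->
  X <= C * m ^+ d -> m ^+ d <= c ^+ d * X ->
  - (d%:R * ln c) <= ln X - d%:R * ln m <= ln C.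
Proof.
move=> X1 m1 C1 c1 upper lower.
have pos (t : R) : 1 <= t -> t \in Num.pos by move=> t1; rewrite posrE; lra.
have posX (t : R) k : 1 <= t -> t ^+ k \in Num.pos.
  by move=> t1; rewrite posrE exprn_gt0 //; lra.
have ln_pow (t : R) : 1 <= t -> ln (t ^+ d) = d%:R * ln t.
  by move=> t1; rewrite lnXn ?mulr_natl //; lra.
have XP := pos X X1; have CP := pos C C1; have mP := posX m d m1; have cP := posX c d c1.
have ln_upper : ln X <= ln (C * m ^+ d) by rewrite ler_ln ?rpredM.
have ln_lower : ln (m ^+ d) <= ln (c ^+ d * X) by rewrite ler_ln ?rpredM.
move: ln_upper ln_lower; rewrite !lnM // !ln_pow // => ln_upper ln_lower.
by apply/andP; split; lra.
Qed.

Lemma size_pdeg (phi : {poly rat}) : (0 < pdeg phi)%N -> size phi = (pdeg phi).+1.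
Proof. by rewrite /pdeg; case: (size phi). Qed.

Definition scale_defect (R : realType) (s : R) : R := log_plus s + log_plus s^-1.

Lemma log_plus_scale (R : realType) (s t : R) : 0 < s -> 0 <= t ->
  `|log_plus (s * t) - log_plus t| <= scale_defect s.
Proof.
move=> s_gt0 t0; have st0 : 0 <= s * t by rewrite mulr_ge0 // ltW.
have upper := log_plusM_le (ltW s_gt0) t0.
have lower := log_plusM_le (_ : 0 <= s^-1) st0.
rewrite mulKf ?gt_eqF ?invr_ge0 ?(ltW s_gt0) // in lower.
have := log_plus_ge0 s; have := log_plus_ge0 s^-1.
by rewrite /scale_defect ler_norml; move=> *; apply/andP; split; lra.
Qed.

Section Place.
Variables (R : realType) (absQ : rat -> rat) (K : vclosure R absQ).
Local Notation F := (vc_field K).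
Local Notation N := (@vc_abs R absQ K).
Variables (phi : {poly rat}) (g : F) (e : nat).
Hypothesis absQ_neq0 : forall q, q != 0 -> absQ q != 0.
Hypothesis d_gt0 : (0 < pdeg phi)%N.
Hypothesis e_gt0 : (0 < e)%N.
Hypothesis g_root : g ^+ e = ratr (lead_coef phi).
Local Notation d := (pdeg phi).
Local Notation char0 := (vc_field_char0 K absQ_neq0).
Local Notation ratrF := (ratr_char0 char0).
Local Notation psi := (psi_poly phi g).

Lemma lead_coef_pdeg_neq0 : lead_coef phi != 0.
Proof. by rewrite lead_coef_eq0 -size_poly_eq0 size_pdeg. Qed.

Lemma ratr_lead_coef_neq0 : (ratr (lead_coef phi) : F) != 0.
Proof. by rewrite -vc_abs_eq0 vc_absQ fmorph_eq0 absQ_neq0 ?lead_coef_pdeg_neq0. Qed.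

Lemma root_lead_coef_neq0 : g != 0.
Proof. by have := ratr_lead_coef_neq0; rewrite -g_root expf_eq0 e_gt0. Qed.

Lemma size_psi_pdeg : size psi = d.+1.
Proof. by rewrite (size_psi_poly char0) ?root_lead_coef_neq0 ?size_pdeg. Qed.

Lemma log_plus_lead_coef_pow (y : rat) :
  log_plus (ratr (absQ (lead_coef phi * y ^+ e)) : R)
  = e%:R * log_plus (N (g * ratr y)).
Proof.
rewrite -(vc_absQ K) (rmorphM ratrF) (rmorphXn ratrF) /= -g_root -exprMn vc_absX.
by rewrite log_plusX ?vc_abs_ge0.
Qed.

Lemma log_plus_psi_step_arch (y : rat) :
  - (d%:R * ln (c_arch phi g)) <=
    log_plus (N (g * ratr phi.[y])) - d%:R * log_plus (N (g * ratr y))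
  <= ln (C_arch phi g).
Proof.
rewrite -(horner_psi_poly char0) ?root_lead_coef_neq0 //.
apply: ln_bounds_of_pow_bounds; rewrite ?max1_ge1 //.
  exact: max1_horner_le_sum size_psi_pdeg.
exact: max1_pow_le_horner_arch size_psi_pdeg d_gt0.
Qed.

Section NonArchimedean.
Hypothesis absQ_nat_le1 : forall n : nat, absQ n%:R <= 1.

Lemma log_plus_psi_step_nonarch (y : rat) :
  - (d%:R * ln (c_nonarch phi g)) <=
    log_plus (N (g * ratr phi.[y])) - d%:R * log_plus (N (g * ratr y))
  <= ln (C_nonarch phi g).
Proof.
rewrite -(horner_psi_poly char0) ?root_lead_coef_neq0 //.
apply: ln_bounds_of_pow_bounds; rewrite ?max1_ge1 //.
  exact: max1_horner_le_max absQ_nat_le1 _ _ _ size_psi_pdeg.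
exact: max1_pow_le_horner_nonarch absQ_nat_le1 _ _ _ size_psi_pdeg d_gt0.
Qed.

Hypothesis good_coef : forall i, absQ phi`_i <= 1.
Hypothesis good_lead : absQ (lead_coef phi) = 1.

Lemma vc_abs_root_good : N g = 1.
Proof.
apply/eqP; rewrite -(@pexpr_eq1 _ _ e) ?vc_abs_ge0 -?lt0n // -vc_absX g_root.
by rewrite vc_absQ good_lead rmorph1.
Qed.

Lemma log_plus_psi_step_good (y : rat) :
  log_plus (N (g * ratr phi.[y])) = d%:R * log_plus (N (g * ratr y)).
Proof.
have g0 := root_lead_coef_neq0.
have abs_coef i : N psi`_i = ratr (absQ phi`_i).
  rewrite (coef_psi_poly char0) // vc_absM vc_absM vc_absQ vc_absX vc_absV //.
  by rewrite vc_abs_root_good invr1 expr1n mulr1 mul1r.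
rewrite -(horner_psi_poly char0) // /log_plus.
rewrite (max1_horner_good absQ_nat_le1 _ size_psi_pdeg d_gt0) ?lnXn ?max1_gt0 ?mulr_natl //.
  by move=> i; rewrite abs_coef -(rmorph1 (@ratr R)) ler_rat.
by rewrite abs_coef (_ : phi`_d = lead_coef phi) // good_lead rmorph1.
Qed.

End NonArchimedean.
End Place.

Lemma arch_abs_neq0 (q : rat) : q != 0 -> arch_abs q != 0.
Proof. by rewrite /arch_abs normr_eq0. Qed.

Lemma logn_ndvd (p n : nat) : ~~ (p %| n)%N -> logn p n = 0%N.
Proof.
by move=> pn; apply/eqP; rewrite -leqn0 leqNgt logn_gt0 mem_primes (negbTE pn) !andbF.
Qed.

Section PadicAbs.
Variable p : nat.
Hypothesis p_pr : prime p.

Lemma padic_abs_neq0 (q : rat) : q != 0 -> padic_abs p q != 0.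
Proof.
by move=> q0; rewrite /padic_abs (negbTE q0) expfz_neq0 // pnatr_eq0 -lt0n prime_gt0.
Qed.

Lemma padic_abs_le1 (q : rat) : ~~ (p %| `|denq q|)%N -> padic_abs p q <= 1.
Proof.
rewrite /padic_abs; case: eqP => // _ /logn_ndvd ->; rewrite sub0r -exprnN.
by rewrite invf_le1 ?exprn_gt0 ?exprn_ege1 ?ltr0n ?ler1n ?prime_gt0.
Qed.

Lemma padic_abs_nat_le1 (n : nat) : padic_abs p n%:R <= 1.
Proof.
apply: padic_abs_le1; rewrite -[n%:R]/((n%:Z)%:~R) denq_int dvdn1.
by apply: contraTN p_pr => /eqP->.
Qed.

End PadicAbs.

Lemma bad_bound_gt0 (phi : {poly rat}) : phi != 0 -> (0 < bad_bound phi)%N.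
Proof.
move=> phi0; rewrite /bad_bound muln_gt0 absz_gt0 numq_eq0 lead_coef_eq0 phi0 andbT.
by rewrite prodn_gt0 // => i; rewrite absz_gt0 denq_eq0.
Qed.

(* A prime not dividing [bad_bound phi] divides no denominator and not the
   numerator of the leading coefficient, so it is a place of good reduction. *)
Lemma mem_bad_primes (phi : {poly rat}) (p : nat) : phi != 0 ->
  (p \in bad_primes phi) = prime p && bad_at p phi.
Proof.
move=> phi0; rewrite mem_filter mem_primes bad_bound_gt0 //=.
apply/andP/andP=> [[bad /andP [p_pr _]] //|[p_pr bad]]; split=> //; rewrite p_pr /=.
apply: contraLR bad => pB; rewrite /bad_at negbK.
have den_ndvd (i : 'I_(size phi)) : ~~ (p %| `|denq phi`_i|)%N.
  apply: contra pB => /dvdn_trans; apply.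
  by rewrite /bad_bound (bigD1 i) //= -mulnA dvdn_mulr.
have size_gt0 : (0 < size phi)%N by rewrite size_poly_gt0.
apply/andP; split.
  by apply/(all_nthP 0) => i ilt; exact: padic_abs_le1 (den_ndvd (Ordinal ilt)).
have num_ndvd : ~~ (p %| `|numq (lead_coef phi)|)%N.
  by apply: contra pB => /dvdn_trans; apply; exact: dvdn_mull.
rewrite /padic_abs lead_coef_eq0 (negbTE phi0) (logn_ndvd num_ndvd).
rewrite (logn_ndvd (den_ndvd (Ordinal (_ : (size phi).-1 < size phi)%N))).
  by rewrite subrr expr0z.
by rewrite prednK.
Qed.

Lemma good_padic_abs_coef (phi : {poly rat}) (p : nat) : ~~ bad_at p phi ->
  forall i, padic_abs p phi`_i <= 1.
Proof.
rewrite /bad_at negbK => /andP [/(all_nthP 0) coef_le1 _] i.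
by case: (ltnP i (size phi)) => [/coef_le1 //|isz]; rewrite nth_default // /padic_abs eqxx.
Qed.

Lemma good_padic_abs_lead (phi : {poly rat}) (p : nat) : ~~ bad_at p phi ->
  padic_abs p (lead_coef phi) = 1.
Proof. by rewrite /bad_at negbK => /andP [_ /eqP]. Qed.

Lemma ler_sum_bounds (R : numDomainType) (I : eqType) (r : seq I) (f lo hi : I -> R) :
  (forall i, i \in r -> lo i <= f i <= hi i) ->
  \sum_(i <- r) lo i <= \sum_(i <- r) f i <= \sum_(i <- r) hi i.
Proof.
move=> H; apply/andP; split; rewrite big_seq [X in _ <= X]big_seq;
  by apply: ler_sum => i /H /andP [].
Qed.

Lemma height_ge0 (R : realType) (q : rat) : 0 <= height R q.
Proof.
apply/ln_ge0; rewrite le_max; apply/orP; right.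
by rewrite ler1z -gtz0_ge1 normr_gt0 denq_neq0.
Qed.

Definition places_for (phi : {poly rat}) (qs : seq rat) : seq nat :=
  undup (bad_primes phi ++ flatten [seq primes `|denq q| | q <- qs]).

Section PlacesFor.
Variables (phi : {poly rat}) (qs : seq rat).
Hypothesis phi0 : phi != 0.

Lemma places_for_uniq : uniq (places_for phi qs).
Proof. exact: undup_uniq. Qed.

Lemma places_for_prime : all prime (places_for phi qs).
Proof.
apply/allP => p; rewrite mem_undup mem_cat => /orP [|/flattenP [_ /mapP [q _ ->]]].
  by rewrite mem_bad_primes // => /andP [].
by rewrite mem_primes => /andP [].
Qed.

Lemma places_for_den q : q \in qs -> {subset primes `|denq q| <= places_for phi qs}.
Proof.
move=> qqs p pq; rewrite mem_undup mem_cat; apply/orP; right.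
by apply/flattenP; exists (primes `|denq q|) => //; apply/mapP; exists q.
Qed.

Lemma sum_places_for (R : nmodType) (f : nat -> R) :
  (forall p, p \in places_for phi qs -> ~~ bad_at p phi -> f p = 0) ->
  \sum_(p <- places_for phi qs) f p = \sum_(p <- bad_primes phi) f p.
Proof.
move=> f_good; rewrite (bigID (mem (bad_primes phi))) /= [X in _ + X]big1_seq ?addr0.
  rewrite -big_filter; apply: perm_big; apply: uniq_perm.
  - by rewrite filter_uniq ?places_for_uniq.
  - by rewrite filter_uniq ?primes_uniq.
  by move=> p; rewrite mem_filter mem_undup mem_cat; case: (p \in bad_primes phi).
move=> p /andP [pB pS]; apply: f_good => //; apply: contra pB => bad.
have /allP/(_ p pS) p_pr := places_for_prime.
by rewrite mem_bad_primes // p_pr.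
Qed.

End PlacesFor.

Local Open Scope classical_set_scope.

Section Telescoping.
Variables (R : realType) (D Lc LC : R) (s : nat -> R).
Hypothesis D_gt1 : 1 < D.
Hypothesis LC_ge0 : 0 <= LC.
Hypothesis s_ge0 : forall k, 0 <= s k.
Hypothesis s_step : forall k, - (D * Lc) <= s k.+1 - D * s k <= LC.

Local Notation t k := (D ^+ k)^-1.
Local Notation cL := (D / (D - 1) * Lc).
Local Notation cU := (1 / (D - 1) * LC).

Let D_gt0 : 0 < D. Proof. exact: lt_trans ltr01 D_gt1. Qed.
Let D_neq0 : D != 0. Proof. exact: lt0r_neq0. Qed.
Let D1_neq0 : D - 1 != 0. Proof. by rewrite subr_eq0 gt_eqF. Qed.

Let t_gt0 k : 0 < t k. Proof. by rewrite invr_gt0 exprn_gt0. Qed.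

Let t_cvg0 : t k @[k --> \oo] --> (0 : R).
Proof.
under eq_fun do rewrite -exprVn.
by apply: cvg_expr; rewrite ger0_norm ?invr_ge0 ?ltW // invf_lt1.
Qed.

Let t_scaled_cvg0 c : (fun k => t k * c) @ \oo --> (0 : R).
Proof. by rewrite -(mul0r c); apply: cvgMr_tmp. Qed.

(* Both sequences telescope: the defect of s k.+1 against D * s k is absorbed by
   the geometric tail sum_{j >= k} D^-(j+1) = D^-k / (D - 1). *)
Lemma telescope_upper_noninc : nonincreasing_seq (fun k => s k * t k + t k * cU).
Proof.
apply/nonincreasing_seqP => k; have /andP [_ step] := s_step k.
have -> : s k.+1 * t k.+1 = (s k.+1 - D * s k) * t k.+1 + s k * t k.
  by rewrite exprSr invfM; field; rewrite expf_neq0.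
have -> : t k.+1 * cU = t k * cU - LC * t k.+1.
  by rewrite exprSr invfM; field; rewrite D_neq0 D1_neq0 expf_neq0.
have := ler_wpM2r (ltW (t_gt0 k.+1)) step; lra.
Qed.

Lemma telescope_lower_nondec : nondecreasing_seq (fun k => s k * t k - t k * cL).
Proof.
apply/nondecreasing_seqP => k; have /andP [step _] := s_step k.
have -> : s k.+1 * t k.+1 = (s k.+1 - D * s k) * t k.+1 + s k * t k.
  by rewrite exprSr invfM; field; rewrite expf_neq0.
have -> : t k.+1 * cL = t k * cL - D * Lc * t k.+1.
  by rewrite exprSr invfM; field; rewrite D_neq0 D1_neq0 expf_neq0.
have := ler_wpM2r (ltW (t_gt0 k.+1)) step; rewrite mulNr; lra.
Qed.

Lemma telescope_cvg : s k * t k @[k --> \oo] --> limn (fun k => s k * t k).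
Proof.
pose u k := s k * t k + t k * cU.
have cU_ge0 : 0 <= cU by rewrite mulr_ge0 // divr_ge0 // subr_ge0 ltW.
have u_cvg : cvgn u.
  apply: (nonincreasing_is_cvgn telescope_upper_noninc).
  exists 0 => _ [k _ <-]; apply: addr_ge0; apply: mulr_ge0 => //; exact: ltW.
have -> : (fun k => s k * t k) = (fun k => u k - t k * cU).
  by apply/funext => k; rewrite /u addrK.
by apply/cvg_ex; exists (limn u - 0); apply: cvgB.
Qed.

Lemma telescope_bounds n :
  - (t n * cL) <= limn (fun k => s k * t k) - s n * t n <= t n * cU.
Proof.
set L := limn _; have sL := telescope_cvg.
have uL : s k * t k + t k * cU @[k --> \oo] --> L by rewrite -[L]addr0; apply: cvgD.
have vL : s k * t k - t k * cL @[k --> \oo] --> L by rewrite -[L]subr0; apply: cvgB.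
have upper := nonincreasing_cvgn_ge telescope_upper_noninc (cvgP _ uL) n.
have lower := nondecreasing_cvgn_le telescope_lower_nondec (cvgP _ vL) n.
rewrite (cvg_lim _ uL) // in upper; rewrite (cvg_lim _ vL) // in lower.
by apply/andP; split; lra.
Qed.

Lemma limn_bounded_perturbation (h : nat -> R) (B : R) :
  (forall k, `|h k - s k| <= B) ->
  limn (fun k => h k * t k) = limn (fun k => s k * t k).
Proof.
move=> hs; have sL := telescope_cvg; set L := limn (fun k => s k * t k) in sL *.
apply: cvg_lim => //; apply: (@squeeze_cvgr _ _ _ _ (fun k => s k * t k - t k * B)
                                    (fun k => s k * t k + t k * B)).
- apply: nearW => k; have := hs k; rewrite ler_norml => /andP [lo hi].
  have tk_gt0 := t_gt0 k; apply/andP; split; nra.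
- by rewrite -[L]subr0; apply: cvgB.
- by rewrite -[L]addr0; apply: cvgD.
Qed.

End Telescoping.

Section Global.
Variables (R : realType) (phi : {poly rat}) (e : nat)
  (Kinf : vclosure R arch_abs) (Kp : forall p : nat, vclosure R (padic_abs p))
  (ginf : vc_field Kinf) (gp : forall p : nat, vc_field (Kp p)).
Hypothesis d_gt0 : (0 < pdeg phi)%N.
Hypothesis e_gt0 : (0 < e)%N.
Hypothesis ginf_root : ginf ^+ e = ratr (lead_coef phi).
Hypothesis gp_root : forall p : nat, gp p ^+ e = ratr (lead_coef phi).
Local Notation a := (lead_coef phi).
Local Notation d := (pdeg phi).
Local Notation lambda_inf y := (log_plus (vc_abs (ginf * ratr y))).
Local Notation lambda p y := (log_plus (vc_abs (gp p * ratr y))).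

Definition scaled_height (y : rat) : R := height R (a * y ^+ e) / e%:R.

Definition log_c : R :=
  ln (c_arch phi ginf) + \sum_(p <- bad_primes phi) ln (c_nonarch phi (gp p)).
Definition log_C : R :=
  ln (C_arch phi ginf) + \sum_(p <- bad_primes phi) ln (C_nonarch phi (gp p)).
Definition total_defect : R :=
  scale_defect (vc_abs ginf) + \sum_(p <- bad_primes phi) scale_defect (vc_abs (gp p)).

Let phi0 : phi != 0.
Proof. by rewrite -size_poly_eq0 size_pdeg. Qed.

Lemma scaled_height_places (y : rat) (S : seq nat) : uniq S -> all prime S ->
  {subset primes `|denq (a * y ^+ e)| <= S} ->
  scaled_height y = lambda_inf y + \sum_(p <- S) lambda p y.
Proof.
move=> uS S_pr yS; rewrite /scaled_height (height_sum_places R uS S_pr yS).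
rewrite (log_plus_lead_coef_pow arch_abs_neq0 ginf_root).
rewrite big_seq (eq_bigr (fun p => e%:R * lambda p y)) => [|p pS]; last first.
  have /allP/(_ p pS) p_pr := S_pr.
  exact: (log_plus_lead_coef_pow (padic_abs_neq0 p_pr) (gp_root p)).
by rewrite -big_seq -mulr_sumr -mulrDr mulrC mulKf // pnatr_eq0 -lt0n.
Qed.

Lemma height_places (y : rat) (S : seq nat) : uniq S -> all prime S ->
  {subset primes `|denq y| <= S} ->
  height R y = log_plus (vc_abs (ratr y : vc_field Kinf))
               + \sum_(p <- S) log_plus (vc_abs (ratr y : vc_field (Kp p))).
Proof.
move=> uS S_pr yS; rewrite (height_sum_places R uS S_pr yS) vc_absQ.
by congr (_ + _); apply: eq_bigr => p _; rewrite vc_absQ.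
Qed.

Lemma scaled_height_step (y : rat) :
  - (d%:R * log_c) <= scaled_height phi.[y] - d%:R * scaled_height y <= log_C.
Proof.
set S := places_for phi [:: a * y ^+ e; a * phi.[y] ^+ e].
have [uS S_pr] := (places_for_uniq phi [:: a * y ^+ e; a * phi.[y] ^+ e],
                   places_for_prime [:: a * y ^+ e; a * phi.[y] ^+ e] phi0).
rewrite !(scaled_height_places uS S_pr) => [|p|p]; last 2 first.
- by apply: places_for_den; rewrite !inE eqxx.
- by apply: places_for_den; rewrite !inE eqxx orbT.
set f := fun p => lambda p phi.[y] - d%:R * lambda p y.
have -> : lambda_inf phi.[y] + \sum_(p <- S) lambda p phi.[y]
          - d%:R * (lambda_inf y + \sum_(p <- S) lambda p y)
        = (lambda_inf phi.[y] - d%:R * lambda_inf y) + \sum_(p <- S) f p.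
  by rewrite /f sumrB -mulr_sumr; lra.
rewrite sum_places_for // => [|p pS good]; last first.
  have /allP/(_ p pS) p_pr := S_pr.
  rewrite /f (log_plus_psi_step_good (padic_abs_neq0 p_pr) d_gt0 e_gt0 (gp_root p)
    (padic_abs_nat_le1 p_pr) (good_padic_abs_coef good) (good_padic_abs_lead good)).
  by rewrite subrr.
have /andP [inf_lo inf_hi] :=
  log_plus_psi_step_arch arch_abs_neq0 d_gt0 e_gt0 ginf_root y.
have bad_bounds p : p \in bad_primes phi ->
    - (d%:R * ln (c_nonarch phi (gp p))) <= f p <= ln (C_nonarch phi (gp p)).
  move=> pB; have p_pr : prime p by move: pB; rewrite mem_bad_primes // => /andP [].
  exact: (log_plus_psi_step_nonarch (padic_abs_neq0 p_pr) d_gt0 e_gt0 (gp_root p)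
            (padic_abs_nat_le1 p_pr)).
have /andP [bad_lo bad_hi] := ler_sum_bounds bad_bounds.
rewrite sumrN -mulr_sumr in bad_lo.
by rewrite /log_c /log_C mulrDr; apply/andP; split; lra.
Qed.

Lemma height_scaled_height_dist (y : rat) :
  `|height R y - scaled_height y| <= total_defect.
Proof.
set qs := [:: y; a * y ^+ e]; set S := places_for phi qs.
have [uS S_pr] := (places_for_uniq phi qs, places_for_prime qs phi0).
rewrite (height_places uS S_pr) ?(scaled_height_places uS S_pr) => [|p|p]; first last.
- by apply: places_for_den; rewrite mem_head.
- by apply: places_for_den; rewrite !inE eqxx orbT.
set f := fun p => log_plus (vc_abs (ratr y : vc_field (Kp p))) - lambda p y.
have -> : log_plus (vc_abs (ratr y : vc_field Kinf))
            + \sum_(p <- S) log_plus (vc_abs (ratr y : vc_field (Kp p)))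
          - (lambda_inf y + \sum_(p <- S) lambda p y)
        = (log_plus (vc_abs (ratr y : vc_field Kinf)) - lambda_inf y) + \sum_(p <- S) f p.
  by rewrite /f sumrB; lra.
rewrite sum_places_for // => [|p pS good]; last first.
  have /allP/(_ p pS) p_pr := S_pr.
  rewrite /f vc_absM (vc_abs_root_good e_gt0 (gp_root p)) ?mul1r ?subrr //.
  exact: good_padic_abs_lead.
apply: le_trans (ler_normD _ _) _; apply: lerD.
  rewrite distrC vc_absM; apply: log_plus_scale (vc_abs_ge0 _).
  exact/vc_abs_gt0/(root_lead_coef_neq0 arch_abs_neq0 d_gt0 e_gt0 ginf_root).
apply: le_trans (ler_norm_sum _ _ _) _; rewrite big_seq [X in _ <= X]big_seq.
apply: ler_sum => p pB; have p_pr : prime p by move: pB; rewrite mem_bad_primes // => /andP [].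
rewrite /f distrC vc_absM; apply: log_plus_scale (vc_abs_ge0 _).
exact/vc_abs_gt0/(root_lead_coef_neq0 (padic_abs_neq0 p_pr) d_gt0 e_gt0 (gp_root p)).
Qed.

Lemma log_C_ge0 : 0 <= log_C.
Proof. by rewrite addr_ge0 ?sumr_ge0 // => *; apply: log_plus_ge0. Qed.

Lemma scaled_height_ge0 y : 0 <= scaled_height y.
Proof. by rewrite divr_ge0 ?height_ge0. Qed.

End Global.

Theorem theorem2p7 (R : realType) (phi : {poly rat}) (e : nat)
  (Kinf : vclosure R arch_abs) (Kp : forall p : nat, vclosure R (padic_abs p))
  (ginf : vc_field Kinf) (gp : forall p : nat, vc_field (Kp p)) :
  (2 <= pdeg phi)%N -> (1 <= e)%N ->
  ginf ^+ e = ratr (lead_coef phi) ->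
  (forall p : nat, gp p ^+ e = ratr (lead_coef phi)) ->
  forall (x : rat) (n : nat),
    - (((pdeg phi)%:R ^+ n)^-1 * ctilde phi ginf gp)
      <= canonical_height R phi x
         - height R (lead_coef phi * (iter n (fun y => phi.[y]) x) ^+ e)
           / (e%:R * (pdeg phi)%:R ^+ n)
    /\
    canonical_height R phi x
         - height R (lead_coef phi * (iter n (fun y => phi.[y]) x) ^+ e)
           / (e%:R * (pdeg phi)%:R ^+ n)
      <= ((pdeg phi)%:R ^+ n)^-1 * Ctilde phi ginf gp.
Proof.
move=> d_ge2 e_gt0 ginf_root gp_root x n.
have d_gt0 : (0 < pdeg phi)%N := ltnW d_ge2.
have D_gt1 : 1 < (pdeg phi)%:R :> R by rewrite ltr1n.
pose y k := iter k (fun y => phi.[y]) x.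
pose s k := scaled_height R phi e (y k).
have s_step k := scaled_height_step d_gt0 e_gt0 ginf_root gp_root (y k).
have s_ge0 k : 0 <= s k := scaled_height_ge0 R phi e (y k).
have LC_ge0 := log_C_ge0 phi ginf gp.
have dist k := height_scaled_height_dist d_gt0 e_gt0 ginf_root gp_root (y k).
have := telescope_bounds D_gt1 LC_ge0 s_ge0 s_step n.
rewrite /canonical_height (limn_bounded_perturbation D_gt1 LC_ge0 s_ge0 s_step dist).
have -> : s n / (pdeg phi)%:R ^+ n
          = height R (lead_coef phi * y n ^+ e) / (e%:R * (pdeg phi)%:R ^+ n).
  by rewrite /s /scaled_height invfM mulrA.
by move/andP.
Qed.
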